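(* Let $\eta=10^{-4}$. There are absolute constants $c,\epsilon_0>0$ such that for every $\epsilon\in(0,\epsilon_0)$ the following holds. Suppose a (possibly adaptive and randomized) procedure tosses a coin whose probability of heads is $p\in\{1/2-\eta,1/2+\eta\}$ at most $m$ times, and then outputs either a value in $\{1/2-\eta,1/2+\eta\}$ or the symbol `unknown'. If, for each of the two possible values of $p$, the procedure outputs `unknown' with probability at most $0.9$ and outputs the wrong value (the element of $\{1/2-\eta,1/2+\eta\}$ different from $p$) with probability at most $\epsilon$, then $m\ge c\log(1/\epsilon)$.
   Context: Coin tosses are independent; each toss comes up heads with probability $p$. *)

From Stdlib Require Import Reals List.
Open Scope R_scope.

Definition eta : R := / 10000.

(* Possible outputs: the value 1/2 - eta, the value 1/2 + eta, or 'unknown'. *)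
Inductive outcome : Type := OutLo | OutHi | Unknown.

(* A possibly adaptive and randomized coin-tossing procedure, described by its
   behaviour conditioned on the observed history of tosses (most recent toss
   first; [true] = heads):
   - [cont h] : probability that, having observed history [h], the procedure
     tosses the coin once more;
   - [out h o] : probability that it outputs [o] when it stops after history h. *)
Record procedure : Type := {
  cont : list bool -> R;
  out : list bool -> outcome -> R
}.

Definition valid_procedure (P : procedure) : Prop :=
  (forall h, 0 <= cont P h <= 1) /\
  (forall h o, 0 <= out P h o) /\
  (forall h, out P h OutLo + out P h OutHi + out P h Unknown = 1).

(* Probability that the procedure, started after history [h], with at most [k]
   further tosses allowed (it is forced to stop when k = 0), outputs [o] when the
   coin has heads-probability [p]. *)
Fixpoint out_prob (P : procedure) (p : R) (k : nat) (h : list bool) (o : outcome)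
  : R :=
  match k with
  | O => out P h o
  | S k' => (1 - cont P h) * out P h o
            + cont P h * (p * out_prob P p k' (true :: h) o
                          + (1 - p) * out_prob P p k' (false :: h) o)
  end.

Definition prob_output (P : procedure) (p : R) (m : nat) (o : outcome) : R :=
  out_prob P p m nil o.

(* Change of measure. If the heads-probabilities p and p' satisfy p >= r p' and
   1 - p >= r (1 - p'), then every toss history has likelihood under p at least
   r^k times its likelihood under p', so every output event of a procedure making
   at most k tosses is at least r^k times as likely under p as under p'. For
   p = 1/2 - eta and p' = 1/2 + eta the ratio is q = 4999/5001. Under p' the
   procedure answers OutHi with probability at least 1/10 - eps, hence under p it
   answers the wrong value OutHi with probability at least q^m (1/10 - eps); this
   is at most eps, which forces q^m <= 20 eps, i.e. m >= ln(1/eps) / (2 ln(1/q))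
   once eps < 1/400. *)
From Stdlib Require Import Reals List Lra Psatz.
Open Scope R_scope.

Section Procedure.

Variable P : procedure.
Hypothesis HP : valid_procedure P.

Lemma out_prob_total p k h :
  out_prob P p k h OutLo + out_prob P p k h OutHi + out_prob P p k h Unknown = 1.
Proof.
  destruct HP as [_ [_ Hsum]]. revert h.
  induction k as [|k IH]; intro h; simpl; [apply Hsum|].
  transitivity ((1 - cont P h) * (out P h OutLo + out P h OutHi + out P h Unknown)
    + cont P h *
      (p * (out_prob P p k (true :: h) OutLo + out_prob P p k (true :: h) OutHi
            + out_prob P p k (true :: h) Unknown)
       + (1 - p) * (out_prob P p k (false :: h) OutLo + out_prob P p k (false :: h) OutHi
                    + out_prob P p k (false :: h) Unknown))).
  - ring.
  - rewrite Hsum, !IH. ring.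
Qed.

Lemma out_prob_nonneg p k h o : 0 <= p <= 1 -> 0 <= out_prob P p k h o.
Proof.
  destruct HP as [Hcont [Hout _]]. intro Hp. revert h.
  induction k as [|k IH]; intro h; simpl; [apply Hout|].
  pose proof (Hcont h). pose proof (Hout h o).
  pose proof (IH (true :: h)). pose proof (IH (false :: h)).
  apply Rplus_le_le_0_compat; apply Rmult_le_pos; try lra.
  apply Rplus_le_le_0_compat; apply Rmult_le_pos; lra.
Qed.

Lemma out_prob_change_of_measure p p' r k h o :
  0 <= p <= 1 -> 0 <= p' <= 1 -> 0 <= r <= 1 ->
  r * p' <= p -> r * (1 - p') <= 1 - p ->
  r ^ k * out_prob P p' k h o <= out_prob P p k h o.
Proof.
  intros Hp Hp' Hr Hheads Htails. destruct HP as [Hcont [Hout _]]. revert h.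
  induction k as [|k IH]; intro h; simpl; [lra|].
  pose proof (Hcont h) as Hc. pose proof (Hout h o) as Ho.
  pose proof (IH (true :: h)) as IHt. pose proof (IH (false :: h)) as IHf.
  pose proof (out_prob_nonneg p' k (true :: h) o Hp') as Nt.
  pose proof (out_prob_nonneg p' k (false :: h) o Hp') as Nf.
  pose proof (pow_le r k (proj1 Hr)) as Hrk0.
  assert (Hrk1 : r ^ k <= 1) by (rewrite <- (pow1 k); apply pow_incr; lra).
  set (Rk := r ^ k) in *.
  set (Xt := out_prob P p k (true :: h) o) in *.
  set (Xf := out_prob P p k (false :: h) o) in *.
  set (Yt := out_prob P p' k (true :: h) o) in *.
  set (Yf := out_prob P p' k (false :: h) o) in *.
  assert (Hstop : r * Rk * ((1 - cont P h) * out P h o) <= (1 - cont P h) * out P h o).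
  { assert (0 <= (1 - cont P h) * out P h o) by (apply Rmult_le_pos; lra).
    assert (r * Rk <= 1) by nra. nra. }
  assert (Hhd : r * Rk * (p' * Yt) <= p * Xt).
  { assert (0 <= Rk * Yt) by (apply Rmult_le_pos; lra).
    apply Rle_trans with (p * (Rk * Yt)); [nra | apply Rmult_le_compat_l; lra]. }
  assert (Htl : r * Rk * ((1 - p') * Yf) <= (1 - p) * Xf).
  { assert (0 <= Rk * Yf) by (apply Rmult_le_pos; lra).
    apply Rle_trans with ((1 - p) * (Rk * Yf)); [nra | apply Rmult_le_compat_l; lra]. }
  assert (Hmix : r * Rk * (p' * Yt + (1 - p') * Yf) <= p * Xt + (1 - p) * Xf) by lra.
  assert (Hcmix : cont P h * (r * Rk * (p' * Yt + (1 - p') * Yf))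
                  <= cont P h * (p * Xt + (1 - p) * Xf))
    by (apply Rmult_le_compat_l; lra).
  nra.
Qed.

End Procedure.

Definition p_lo : R := 1/2 - eta.
Definition p_hi : R := 1/2 + eta.

Definition q : R := 4999 / 5001.

Lemma q_bounds : 0 < q < 1.
Proof. unfold q; lra. Qed.

Lemma prob_output_lo_ge_pow_q P m o : valid_procedure P ->
  q ^ m * prob_output P p_hi m o <= prob_output P p_lo m o.
Proof.
  intro HP. apply out_prob_change_of_measure; trivial;
    unfold p_lo, p_hi, q, eta; lra.
Qed.

Lemma prob_output_hi_OutHi_ge P m eps : valid_procedure P ->
  prob_output P p_hi m Unknown <= 9/10 -> prob_output P p_hi m OutLo <= eps ->
  1/10 - eps <= prob_output P p_hi m OutHi.
Proof.
  intros HP Hunk Hlo. pose proof (out_prob_total P HP p_hi m nil). unfold prob_output in *. lra.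
Qed.

Lemma pow_q_le_20_eps P m eps : valid_procedure P -> eps < 1/20 ->
  prob_output P p_lo m OutHi <= eps ->
  prob_output P p_hi m Unknown <= 9/10 -> prob_output P p_hi m OutLo <= eps ->
  q ^ m <= 20 * eps.
Proof.
  intros HP Heps Hwrong Hunk Hlo.
  pose proof (prob_output_lo_ge_pow_q P m OutHi HP).
  pose proof (prob_output_hi_OutHi_ge P m eps HP Hunk Hlo).
  pose proof (pow_lt q m (proj1 q_bounds)).
  nra.
Qed.

Lemma INR_ge_of_pow_le_20_eps (r eps : R) (m : nat) :
  0 < r < 1 -> 0 < eps < /400 -> r ^ m <= 20 * eps ->
  / (2 * - ln r) * ln (1 / eps) <= INR m.
Proof.
  intros Hr Heps Hpow.
  assert (Hlnr : ln r < 0) by (rewrite <- ln_1; apply ln_increasing; lra).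
  assert (Hlog : INR m * ln r <= ln 20 + ln eps).
  { rewrite <- ln_pow, <- ln_mult by lra.
    destruct (Rle_lt_or_eq_dec _ _ Hpow) as [Hlt | ->]; [|lra].
    left. apply ln_increasing; [apply pow_lt|]; lra. }
  assert (Hsmall : 2 * ln 20 < - ln eps).
  { rewrite <- ln_Rinv by lra.
    replace (2 * ln 20) with (ln (20 * 20)) by (rewrite ln_mult by lra; ring).
    apply ln_increasing; [lra|].
    replace (20 * 20) with (/ / 400) by lra. apply Rinv_lt_contravar; lra. }
  assert (0 < ln 20) by (rewrite <- ln_1; apply ln_increasing; lra).
  unfold Rdiv. rewrite Rmult_1_l, ln_Rinv by lra.
  apply (Rmult_le_reg_r (2 * - ln r)); [lra|].
  replace (/ (2 * - ln r) * - ln eps * (2 * - ln r)) with (- ln eps) by (field; lra).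
  nra.
Qed.

Theorem theorem4p2 :
  exists c eps0 : R, 0 < c /\ 0 < eps0 /\
    forall eps : R, 0 < eps < eps0 ->
    forall (m : nat) (P : procedure), valid_procedure P ->
      prob_output P (1/2 - eta) m Unknown <= 9/10 ->
      prob_output P (1/2 - eta) m OutHi <= eps ->
      prob_output P (1/2 + eta) m Unknown <= 9/10 ->
      prob_output P (1/2 + eta) m OutLo <= eps ->
      INR m >= c * ln (1 / eps).
Proof.
  assert (Hlnq : ln q < 0) by (rewrite <- ln_1; apply ln_increasing; unfold q; lra).
  exists (/ (2 * - ln q)), (/ 400).
  split; [apply Rinv_0_lt_compat; lra|]. split; [lra|].
  intros eps Heps m P HP _ Hwrong Hunk Hlo.
  apply Rle_ge, INR_ge_of_pow_le_20_eps; [apply q_bounds | exact Heps |].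
  apply (pow_q_le_20_eps P); trivial. lra.
Qed.
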